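(* Let $X_1,\dots,X_n$ be statistically compact topological spaces. Then the product space $\prod_{i=1}^n X_i$ is statistically compact.
   Context: For $A\subseteq\mathbb{N}$ let $d_n(A)=|A\cap\{1,\dots,n\}|/n$, $\overline{d}(A)=\limsup_n d_n(A)$, $\underline{d}(A)=\liminf_n d_n(A)$, and $d(A)$ their common value when equal. A sequence in $X$ is a map from an infinite subset $M\subseteq\mathbb{N}$ into $X$, written $(x_n)_{n\in M}$; a subsequence is $(x_n)_{n\in N}$ with $N\subseteq M$ infinite. It is nonthin if $\overline{d}(M)>0$. A nonthin sequence $(x_n)_{n\in M}$ is statistically convergent to $a\in X$ if for every open $U\ni a$, $d(\{n\in M:x_n\notin U\})=0$. A topological space is statistically compact if every nonthin sequence in it has a nonthin subsequence that is statistically convergent to some point of the space. *)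

From HB Require Import structures.
From mathcomp Require Import all_boot all_order all_algebra.
From mathcomp Require Import all_classical all_reals all_analysis.
From mathcomp Require Import Rstruct Rstruct_topology.
From Stdlib Require Import Rdefinitions.
Set Implicit Arguments. Unset Strict Implicit. Unset Printing Implicit Defensive.
Import Order.TTheory GRing.Theory Num.Theory.
Local Open Scope classical_set_scope.
Local Open Scope ring_scope.

(* d_n(A) = |A ∩ {1,...,n}| / n  (the value at n = 0 is 0 and irrelevant) *)
Definition dens_n (A : set nat) (n : nat) : R :=
  (\sum_(1 <= k < n.+1) ((k \in A : bool)%:R : R)) / n%:R.

Definition upper_density (A : set nat) : R := limn_sup (dens_n A).
Definition lower_density (A : set nat) : R := limn_inf (dens_n A).

Definition has_density (A : set nat) (a : R) : Prop :=
  upper_density A = a /\ lower_density A = a.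

(* A sequence (x_n)_{n in M} is given by an infinite index set M and a map
   x : nat -> X, of which only the values on M matter. *)
Definition nonthin (M : set nat) : Prop :=
  infinite_set M /\ 0 < upper_density M.

Definition stat_converges {X : topologicalType} (M : set nat) (x : nat -> X)
    (a : X) : Prop :=
  nonthin M /\
  forall U : set X, open U -> U a ->
    has_density [set n | M n /\ ~ U (x n)] 0.

Definition stat_compact (X : topologicalType) : Prop :=
  forall (M : set nat) (x : nat -> X), nonthin M ->
    exists N : set nat, N `<=` M /\ nonthin N /\
      exists a : X, stat_converges N x a.

From HB Require Import structures.
From mathcomp Require Import all_boot all_order all_algebra.
From mathcomp Require Import all_classical all_reals all_analysis.
From mathcomp Require Import Rstruct Rstruct_topology.
From Stdlib Require Import Rdefinitions.
Set Implicit Arguments. Unset Strict Implicit. Unset Printing Implicit Defensive.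
Import Order.TTheory GRing.Theory Num.Theory.
Local Open Scope classical_set_scope.
Local Open Scope ring_scope.
Bind Scope ring_scope with R.

(* The sets S such that N \ S has density zero form a filter on nat, and
   statistical convergence of (x_n)_{n in N} is plain convergence of x along
   that filter.  Convergence in a product space is coordinatewise convergence
   along any filter, so it suffices to refine the index set once for each of
   the n coordinates, using statistical compactness of that factor; since
   statistical convergence passes to nonthin subsets, the coordinates already
   handled keep converging after every later refinement. *)

(* The [/] in [dens_n] is Stdlib's [Rdiv]; this restates it with MathComp's
   division, to which it is convertible. *)
Lemma dens_nE (A : set nat) n :
  dens_n A n = (\sum_(1 <= k < n.+1) ((k \in A : bool)%:R : R)) / n%:R.
Proof. by []. Qed.

Lemma dens_n_ge0 (A : set nat) n : 0 <= dens_n A n.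
Proof. by rewrite dens_nE divr_ge0 // sumr_ge0. Qed.

Lemma dens_n_le1 (A : set nat) n : dens_n A n <= 1.
Proof.
rewrite dens_nE; case: n => [|n]; first by rewrite big_geq // mul0r ler01.
rewrite ler_pdivrMr ?ltr0n // mul1r.
apply: (@le_trans _ _ (\sum_(1 <= k < n.+2) (1 : R))).
  by apply: ler_sum => k _; case: (k \in A).
by rewrite sumr_const_nat subn1.
Qed.

Lemma le_dens_n (A B : set nat) n : A `<=` B -> dens_n A n <= dens_n B n.
Proof.
move=> sAB; rewrite !dens_nE ler_wpM2r ?invr_ge0 //; apply: ler_sum => k _.
by have [/set_mem/sAB/mem_set ->|] := boolP (k \in A).
Qed.

Lemma dens_nU (A B : set nat) n :
  dens_n (A `|` B) n <= dens_n A n + dens_n B n.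
Proof.
rewrite !dens_nE -mulrDl ler_wpM2r ?invr_ge0 // -big_split.
apply: ler_sum => k _.
have [/set_mem[/mem_set->|/mem_set->]|_] := boolP (k \in A `|` B).
- by rewrite lerDl.
- by rewrite lerDr.
- by rewrite addr_ge0.
Qed.

Definition zero_density (A : set nat) := dens_n A @ \oo --> (0 : R).

Lemma has_density0P (A : set nat) : has_density A 0 <-> zero_density A.
Proof.
split=> [[supA0 _]|/cvg_limn_inf_sup[inf0 sup0]]; last by split.
have ubA : has_ubound (range (dens_n A)).
  by exists 1 => _ [k _ <-]; exact: dens_n_le1.
have lbA : has_lbound (range (dens_n A)).
  by exists 0 => _ [k _ <-]; exact: dens_n_ge0.
have sups0 : sups (dens_n A) @ \oo --> (0 : R).
  rewrite (_ : 0 = inf (range (sups (dens_n A)))); first exact: cvg_sups_inf.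
  by rewrite -supA0; apply: cvg_lim => //; exact: cvg_sups_inf.
apply: (@squeeze_cvgr _ _ _ _ (fun=> 0) (sups (dens_n A))) => //.
- apply: nearW => k; rewrite dens_n_ge0 /=.
  by apply: ub_le_sup; [exact: has_ubound_sdrop | exists k => /=].
- exact: cvg_cst.
Qed.

Lemma zero_density0 : zero_density set0.
Proof.
rewrite /zero_density (_ : dens_n set0 = fun=> 0); first exact: cvg_cst.
by apply: funext => n; rewrite dens_nE big1 ?mul0r // => k _; rewrite in_set0.
Qed.

Lemma zero_density_sub (A B : set nat) :
  B `<=` A -> zero_density A -> zero_density B.
Proof.
move=> sBA A0; apply: (@squeeze_cvgr _ _ _ _ (fun=> 0) (dens_n A)) => //.
- by apply: nearW => n; rewrite dens_n_ge0 le_dens_n.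
- exact: cvg_cst.
Qed.

Lemma zero_densityU (A B : set nat) :
  zero_density A -> zero_density B -> zero_density (A `|` B).
Proof.
move=> A0 B0; have AB0 : dens_n A \+ dens_n B @ \oo --> (0 : R).
  by rewrite -[0](addr0 0); exact: (@cvgD _ R^o _ _ _ _ _ _ _ A0 B0).
apply: (@squeeze_cvgr _ _ _ _ (fun=> 0) (dens_n A \+ dens_n B)) => //.
- by apply: nearW => n; rewrite dens_n_ge0 dens_nU.
- exact: cvg_cst.
Qed.

Definition stat_filter (N : set nat) : set_system nat :=
  [set S | zero_density (N `\` S)].

Global Instance stat_filter_filter (N : set nat) : Filter (stat_filter N).
Proof.
constructor.
- by apply: zero_density_sub zero_density0 => n [_ /(_ I)].
- move=> P Q P0 Q0; apply: zero_density_sub (zero_densityU P0 Q0).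
  move=> n [Nn nPQ]; have [Pn|nP] := pselect (P n); last by left.
  by right; split=> // Qn; apply: nPQ.
- move=> P Q sPQ P0; apply: zero_density_sub P0 => n [Nn nQ].
  by split=> // /sPQ.
Qed.

Lemma stat_convergesE {X : topologicalType} (N : set nat) (x : nat -> X) a :
  nonthin N -> stat_converges N x a <-> x @ stat_filter N --> a.
Proof.
move=> ntN; split=> [[_ xa] B|xa]; last first.
  by split=> // U oU Ua; apply/has_density0P/xa/open_nbhs_nbhs.
rewrite nbhsE => -[U [oU Ua] sUB].
apply: zero_density_sub (proj1 (has_density0P _) (xa U oU Ua)).
by move=> n [Nn nBx]; split=> // /sUB.
Qed.

Lemma stat_converges_sub {X : topologicalType} (N N' : set nat) (x : nat -> X) a :
  N' `<=` N -> nonthin N' -> stat_converges N x a -> stat_converges N' x a.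
Proof.
move=> sN'N ntN' [_ xa]; split=> // U oU Ua; apply/has_density0P.
apply: zero_density_sub (proj1 (has_density0P _) (xa U oU Ua)).
by move=> n [/sN'N Nn nUx].
Qed.

Lemma cvg_prod_topology (I : eqType) (X : I -> topologicalType) (T : Type)
    (F : set_system T) {FF : Filter F} (x : T -> prod_topology X)
    (a : prod_topology X) :
  (forall i, (fun t => x t i) @ F --> a i) -> x @ F --> a.
Proof.
have proj_surj i : (fun f : prod_topology X => f i) @` setT = setT.
  by rewrite -subTset => y _; exists (dfwith a i y); rewrite ?dfwithin.
move=> xa; apply/cvg_sup => i; apply/cvg_image => // B /xa xaB.
exists ((fun f : prod_topology X => f i) @^-1` B) => //.
exact: image_preimage.
Qed.

Lemma stat_converges_coords (I : eqType) (X : I -> topologicalType) (s : seq I)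
    (M : set nat) (x : nat -> forall i, X i) :
  (forall i, stat_compact (X i)) -> nonthin M ->
  exists2 N : set nat, N `<=` M /\ nonthin N &
    forall i, i \in s -> exists a : X i, stat_converges N (fun m => x m i) a.
Proof.
move=> Xsc ntM; elim: s => [|i s [N [sNM ntN] xN]].
  by exists M => [|i //]; split.
have [N' [sN'N [ntN' [a xa]]]] := Xsc i N (fun m => x m i) ntN.
exists N'; first by split=> [m /sN'N /sNM|].
move=> j; rewrite inE => /predU1P[-> | js]; first by exists a.
by have [b xb] := xN j js; exists b; apply: stat_converges_sub xb.
Qed.

Theorem mainTheorem13 (n : nat) (X : 'I_n -> topologicalType) :
  (forall i : 'I_n, stat_compact (X i)) ->
  stat_compact (prod_topology X).
Proof.
move=> Xsc M x ntM.
have [N [sNM ntN] xN] := stat_converges_coords (enum 'I_n) x Xsc ntM.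
have {}xN i : exists a : X i, stat_converges N (fun m => x m i) a.
  by apply: xN; rewrite mem_enum.
pose a : prod_topology X := fun i => projT1 (cid (xN i)).
exists N; split=> //; split=> //; exists a.
apply/(stat_convergesE _ _ ntN); apply: cvg_prod_topology => i.
exact/(stat_convergesE _ _ ntN)/(projT2 (cid (xN i))).
Qed.
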